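(* For every integer $k\ge1$ and $\tau\in T$: if $\mathfrak{h}_s(\tau)=k$ then $\rho(\tau)\ge k-\frac12$; if $\mathfrak{r}_s(\tau)=k$ then $\rho(\tau)\ge\frac32k-1$; if $\mathfrak{d}_s(\tau)=k$ then $\rho(\tau)\ge\frac34 2^k-1$. The same holds for $u\in U_f$ with $\mathfrak{h}_s',\mathfrak{r}_s',\mathfrak{d}_s'$ in place of $\mathfrak{h}_s,\mathfrak{r}_s,\mathfrak{d}_s$.
   Context: Let $m\ge0$. $T$: the empty tree $\emptyset$ and all $\tau=[\tau_1,\dots,\tau_\kappa]_l$ with $l\in\{0,\dots,m\}$, $\kappa\ge0$, $\tau_j\in T\setminus\{\emptyset\}$ unordered (new root of color $l$ joined to roots of the $\tau_j$; $\bullet_l$ if $\kappa=0$). Order: $\rho(\emptyset)=0$, $\rho([\tau_1,\dots,\tau_\kappa]_l)=\sum_j\rho(\tau_j)+1$ if $l=0$, $+\frac12$ if $l\ge1$. $U_f$: trees $u=[\tau_1,\dots,\tau_\kappa]_f$, $\kappa\ge0$, $\tau_j\in T\setminus\{\emptyset\}$, $\rho(u)=\sum_j\rho(\tau_j)$, $\mathfrak{g}'(u)=\max_j\mathfrak{g}(\tau_j)$. Maxima over empty sets are $0$. $\mathfrak{h}_s(\emptyset)=0$, $\mathfrak{h}_s([\tau_1,\dots,\tau_\kappa]_l)=1$ if $l>0$, $=1+\max_j\mathfrak{h}_s(\tau_j)$ if $l=0$. $\mathfrak{r}_s(\emptyset)=0$, $\mathfrak{r}_s(\bullet_l)=1$;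 for $\tau=[\tau_1,\dots,\tau_\kappa]_l$: $1$ if $l>0$; $\mathfrak{r}_s(\tau_1)$ if $l=0,\kappa=1$; $1+\max_j\mathfrak{r}_s(\tau_j)$ if $l=0,\kappa\ge2$. $\mathfrak{d}_s(\emptyset)=0$, $\mathfrak{d}_s(\bullet_l)=1$; for $\tau=[\tau_1,\dots,\tau_\kappa]_l$: $1$ if $l>0$; with $M=\max_j\mathfrak{d}_s(\tau_j)$, $M$ if $l=0$ and exactly one $i$ has $\mathfrak{d}_s(\tau_i)=M$, and $M+1$ if $l=0$ and at least two indices attain $M$. *)

From mathcomp Require Import all_boot all_order all_algebra.
Set Implicit Arguments. Unset Strict Implicit. Unset Printing Implicit Defensive.
Import Order.TTheory GRing.Theory Num.Theory.

(* Non-empty colored rooted trees: [t_1,...,t_k]_l is [Node l [:: t_1; ...; t_k]].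
   Children are stored in a list; all functions below are symmetric in the
   children, so the order is irrelevant (trees are unordered). *)
Inductive ntree : Type := Node : nat -> seq ntree -> ntree.

(* T = option ntree, with None = the empty tree. *)
Definition tree := option ntree.

Fixpoint ncolored (m : nat) (t : ntree) : bool :=
  match t with Node l ts => (l <= m) && all (ncolored m) ts end.
Definition colored (m : nat) (t : tree) : bool :=
  if t is Some t' then ncolored m t' else true.

Local Open Scope ring_scope.
Fixpoint nrho (t : ntree) : rat :=
  match t with Node l ts =>
    foldr (fun x acc => x + acc) 0 (map nrho ts) + (if l == 0%N then 1 else 1/2)
  end.
Definition rho (t : tree) : rat := if t is Some t' then nrho t' else 0.
Local Close Scope ring_scope.

Definition maxs (s : seq nat) : nat := foldr maxn 0 s.

Fixpoint nh (t : ntree) : nat :=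
  match t with Node l ts => if l == 0 then (maxs (map nh ts)).+1 else 1 end.
Definition h_s (t : tree) : nat := if t is Some t' then nh t' else 0.

Fixpoint nr (t : ntree) : nat :=
  match t with Node l ts =>
    if l != 0 then 1 else
    match ts with
    | [::] => 1
    | [:: t1] => nr t1
    | _ => (maxs (map nr ts)).+1
    end
  end.
Definition r_s (t : tree) : nat := if t is Some t' then nr t' else 0.

Fixpoint nd (t : ntree) : nat :=
  match t with Node l ts =>
    if l != 0 then 1 else
    if ts is [::] then 1 else
    let ds := map nd ts in
    let M := maxs ds in
    if 2 <= count (pred1 M) ds then M.+1 else M
  end.
Definition d_s (t : tree) : nat := if t is Some t' then nd t' else 0.

(* U_f: u = [t_1,...,t_k]_f with non-empty t_j, represented by its list of children *)
Definition utree := seq ntree.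
Definition ucolored (m : nat) (u : utree) : bool := all (ncolored m) u.
Definition urho (u : utree) : rat :=
  foldr (fun x acc => (x + acc)%R) 0%R (map nrho u).
Definition h_s' (u : utree) : nat := maxs (map nh u).
Definition r_s' (u : utree) : nat := maxs (map nr u).
Definition d_s' (u : utree) : nat := maxs (map nd u).

From mathcomp Require Import all_boot all_order all_algebra.
From mathcomp Require Import lra.
Import Order.TTheory GRing.Theory Num.Theory.
Local Open Scope ring_scope.

(* Every vertex weighs at least 1/2, and a root of colour 0 weighs 1.
   By induction on the tree, such a root adds 1 to the weight of a child
   realising the maximum: this gives the bound for h_s.  For r_s the height
   grows only at a colour-0 root with at least two children, which contributes
   1 plus at least 1/2 from a second child, i.e. 3/2 per level.  For d_s the
   value grows only when two children realise the maximum M, so the weight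
   at least doubles: 2 (3/4 2^M - 1) + 1 = 3/4 2^(M+1) - 1.  A tree of U_f
   with positive value has a child realising the maximum, which carries the
   bound. *)

Section NtreeInd.
Variable P : ntree -> Prop.
Hypothesis IH : forall l ts, (forall t, List.In t ts -> P t) -> P (Node l ts).

Fixpoint ntree_ind_in (t : ntree) : P t :=
  match t with Node l ts => IH l ts
   ((fix F (ts : seq ntree) : forall t, List.In t ts -> P t :=
      match ts with
      | [::] => fun t (hin : List.In t [::]) => match hin with end
      | x :: xs => fun t hin => match hin with
                   | or_introl e => eq_ind x P (ntree_ind_in x) t e
                   | or_intror h => F xs t h end
      end) ts) end.
End NtreeInd.

Lemma maxs_attained {T : Type} (f : T -> nat) (ts : seq T) : ts <> [::] ->
  exists2 t, List.In t ts & f t = maxs (map f ts).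
Proof.
elim: ts => [|x [|y ys] IHxs] // _; first by exists x; [left | rewrite /= maxn0].
have [t ht et] := IHxs ltac:(discriminate).
have -> : maxs (map f [:: x, y & ys]) = maxn (f x) (maxs (map f (y :: ys))) by [].
rewrite -et.
by case: leqP => _; [exists t; [right|] | exists x; [left|]].
Qed.

Lemma nrhoE l ts : nrho (Node l ts) = urho ts + (if l == 0%N then 1 else 1/2).
Proof. by []. Qed.

Lemma urho_cons t ts : urho (t :: ts) = nrho t + urho ts.
Proof. by []. Qed.

Lemma nrho_ge_half t : 1/2 <= nrho t.
Proof.
elim/ntree_ind_in: t => l ts IH.
have children_ge0 : 0 <= urho ts.
  elim: ts IH => [|x xs IHxs] IH //.
  have := IH x (or_introl erefl); have := IHxs (fun t h => IH t (or_intror h)).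
  rewrite urho_cons; lra.
rewrite nrhoE; case: (l == 0%N); lra.
Qed.

Lemma urho_ge0 ts : 0 <= urho ts.
Proof. elim: ts => [|x xs IH] //; rewrite urho_cons; have := nrho_ge_half x; lra. Qed.

Lemma nrho_le_urho {t ts} : List.In t ts -> nrho t <= urho ts.
Proof.
elim: ts => [|x xs IH] //= [->|h]; rewrite urho_cons.
  by have := urho_ge0 xs; lra.
by have := IH h; have := nrho_ge_half x; lra.
Qed.

Lemma nrho_addhalf_le_urho {t ts} : List.In t ts -> (2 <= size ts)%N ->
  nrho t + 1/2 <= urho ts.
Proof.
case: ts => [|x xs] //= [->|h] size_ge2; rewrite urho_cons.
- case: xs size_ge2 => [|y ys] // _.
  by rewrite urho_cons; have := nrho_ge_half y; have := urho_ge0 ys; lra.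
- by have := nrho_le_urho h; have := nrho_ge_half x; lra.
Qed.

Lemma count_map_gt0 {f : ntree -> nat} {M ts} : (0 < count (pred1 M) (map f ts))%N ->
  exists2 t, List.In t ts & f t = M.
Proof.
elim: ts => [|x xs IH] //=; case: eqP => /= [<- _ | _ h]; first by exists x; [left|].
by have [t ht <-] := IH h; exists t; [right|].
Qed.

Lemma count_map_ge2 {f : ntree -> nat} {M ts} : (2 <= count (pred1 M) (map f ts))%N ->
  exists a b, [/\ List.In a ts, List.In b ts, f a = M, f b = M
                & nrho a + nrho b <= urho ts].
Proof.
elim: ts => [|x xs IH] //=; case: eqP => /= [<- h | _ h].
  move: h; rewrite add1n ltnS => /count_map_gt0[b hb eb].
  exists x, b; split; [by left | by right | by [] | exact: eb |].
  by rewrite urho_cons; have := nrho_le_urho hb; lra.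
have [a [b [ha hb ea eb hab]]] := IH h.
exists a, b; split; [by right | by right | exact: ea | exact: eb |].
by rewrite urho_cons; have := nrho_ge_half x; lra.
Qed.

Lemma nh_bound t : (nh t)%:R - 1/2 <= nrho t.
Proof.
elim/ntree_ind_in: t => l ts IH; rewrite nrhoE /=.
have [_|_] /= := eqVneq l 0%N; last by have := urho_ge0 ts; lra.
case: ts IH => [|x xs] IH; first by rewrite /urho /=; lra.
have [t ht <-] := @maxs_attained _ nh (x :: xs) ltac:(discriminate).
by rewrite -natr1; have := IH t ht; have := nrho_le_urho ht; lra.
Qed.

Lemma nr_bound t : 3/2 * (nr t)%:R - 1 <= nrho t.
Proof.
elim/ntree_ind_in: t => l ts IH; rewrite nrhoE /=.
have [_|_] /= := eqVneq l 0%N; last by have := urho_ge0 ts; lra.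
case: ts IH => [|x [|y ys]] IH; first by rewrite /urho /=; lra.
  by have := IH x (or_introl erefl); rewrite /urho /=; lra.
have [t ht <-] := @maxs_attained _ nr [:: x, y & ys] ltac:(discriminate).
by rewrite -natr1; have := IH t ht; have := nrho_addhalf_le_urho ht isT; lra.
Qed.

Lemma nd_bound t : 3/4 * 2 ^+ (nd t) - 1 <= nrho t.
Proof.
elim/ntree_ind_in: t => l ts IH; rewrite nrhoE /=.
have [_|_] /= := eqVneq l 0%N; last by have := urho_ge0 ts; lra.
case: ts IH => [|x xs] IH; first by rewrite /urho /=; lra.
case: ifP => [two_max | _].
  have [a [b [ha hb <- eb hab]]] := count_map_ge2 two_max.
  have := IH b hb; rewrite eb exprS; have := IH a ha; lra.
have [t ht <-] := @maxs_attained _ nd (x :: xs) ltac:(discriminate).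
by have := IH t ht; have := nrho_le_urho ht; lra.
Qed.

Lemma urho_bound (g : nat -> rat) {f : ntree -> nat} :
  (forall t, g (f t) <= nrho t) ->
  forall u : utree, u <> [::] -> g (maxs (map f u)) <= urho u.
Proof.
move=> bound_f u nonempty_u; have [t ht <-] := @maxs_attained _ f _ nonempty_u.
exact: le_trans (bound_f t) (nrho_le_urho ht).
Qed.

Theorem mainTheorem9 (m k : nat) : (1 <= k)%N ->
  (forall t : tree, colored m t ->
     [/\ h_s t = k -> k%:R - 1/2 <= rho t,
         r_s t = k -> 3/2 * k%:R - 1 <= rho t
       & d_s t = k -> 3/4 * 2 ^+ k - 1 <= rho t]) /\
  (forall u : utree, ucolored m u ->
     [/\ h_s' u = k -> k%:R - 1/2 <= urho u,
         r_s' u = k -> 3/2 * k%:R - 1 <= urho u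
       & d_s' u = k -> 3/4 * 2 ^+ k - 1 <= urho u]).
Proof.
case: k => [//|k] _; split.
  case => [t|] _ /=; last by split=> k0; discriminate k0.
  by split => <-; [exact: nh_bound | exact: nr_bound | exact: nd_bound].
move=> [|t ts] _; first by split=> k0; discriminate k0.
rewrite /h_s' /r_s' /d_s'; split => <-.
- by apply: (urho_bound (fun n => n%:R - 1/2) nh_bound).
- by apply: (urho_bound (fun n => 3/2 * n%:R - 1) nr_bound).
- by apply: (urho_bound (fun n => 3/4 * 2 ^+ n - 1) nd_bound).
Qed.
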